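(* Let $G$ be a bus graph containing an $(I,O)$-chain (as defined below). Then in any realization $\Gamma$ of $G$, $\Gamma(I)$ and $\Gamma(O)$ are parallel.
   Context: A bus graph is a finite bipartite graph $G=(\mathcal{B},\mathcal{C};\mathcal{E})$ with $\deg(c)\le 4$ for all $c\in\mathcal{C}$. A realization $\Gamma$ of $G$ in the integer grid is a drawing such that: (1) each $B\in\mathcal{B}$ is drawn as a closed line segment $\Gamma(B)$ along a grid line (a ''bus''); (2) each $c\in\mathcal{C}$ is drawn as a grid point $\Gamma(c)$; (3) each edge $(B,c)\in\mathcal{E}$ is drawn as a closed line segment along a grid line between a point of $\Gamma(B)$ and $\Gamma(c)$, perpendicular to $\Gamma(B)$, containing no connectors or buses other than $\Gamma(B)$ and $\Gamma(c)$ (edges may cross other edges); (4) no two buses or connectors intersect. An $(A,B)$-perp consists of three distinct $\mathcal{C}$-vertices $x,y,z$, five distinct $\mathcal{B}$-vertices $A,A',B,B',C$, and the twelve edges $(A,x),(A',x),(B,x),(B',x)$, $(A,y),(A',y),(B,y),(C,y)$, $(A,z),(A',z),(B',z),(C,z)$ (for different names substitute accordingly, e.g. an $(I_3,O)$-perp has $I_3$ in the role of $A$ and $O$ in the role of $B$). A $(B,o)$-flipper consists of an $(A,B)$-perp (for some fresh $A$) together with an additional $\mathcal{C}$-vertex $o$ and additional edges $(B,o),(B',o)$. An $(I,O)$-chain consists of vertex-disjoint copies of an $(I,o_1)$-flipper, an $(I_1,o_2)$-flipper, an $(I_2,o_3)$-flipper and an $(I_3,O)$-perp, together with the three additional edges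 $(I_1,o_1),(I_2,o_2),(I_3,o_3)$. *)

From mathcomp Require Import all_boot all_order all_algebra.
Set Implicit Arguments. Unset Strict Implicit. Unset Printing Implicit Defensive.
Import Order.TTheory GRing.Theory Num.Theory.
Local Open Scope ring_scope.

(* A bus graph: finite bipartite graph with sides Bt (buses) and Ct
   (connectors), edge relation E, and every connector of degree <= 4. *)
Definition bus_graph (Bt Ct : finType) (E : Bt -> Ct -> bool) : Prop :=
  forall c : Ct, (#|[set b | E b c]| <= 4)%N.

Definition gpoint := (int * int)%type.

(* A closed axis-parallel segment on a grid line:
   if [horiz], it is {(t, line) | lo <= t <= hi}, else {(line, t) | lo <= t <= hi}. *)
Record gseg := GSeg { horiz : bool; line : int; lo : int; hi : int }.

Definition on_gseg (s : gseg) (p : gpoint) : bool :=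
  if horiz s then (p.2 == line s) && (lo s <= p.1 <= hi s)
  else (p.1 == line s) && (lo s <= p.2 <= hi s).

Definition foot (s : gseg) (p : gpoint) : gpoint :=
  if horiz s then (p.1, line s) else (line s, p.2).

(* r lies on the closed segment between p and q (exact for axis-parallel
   segments, which is the only case used) *)
Definition in_seg (p q r : gpoint) : bool :=
  (Num.min p.1 q.1 <= r.1 <= Num.max p.1 q.1) &&
  (Num.min p.2 q.2 <= r.2 <= Num.max p.2 q.2).

Record drawing (Bt Ct : finType) := Drawing {
  gbus : Bt -> gseg;
  gcon : Ct -> gpoint }.

Definition realization (Bt Ct : finType) (E : Bt -> Ct -> bool)
  (G : drawing Bt Ct) : Prop :=
  (forall b, lo (gbus G b) < hi (gbus G b)) /\
  (* (3) each edge (b,c) is the perpendicular segment from gcon c to a point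
         of gbus b, containing no other connector and meeting no other bus *)
  (forall b c, E b c ->
     let q := foot (gbus G b) (gcon G c) in
     [/\ on_gseg (gbus G b) q,
         (forall c', c' != c -> ~~ in_seg (gcon G c) q (gcon G c')) &
         (forall b' p, b' != b -> in_seg (gcon G c) q p -> ~~ on_gseg (gbus G b') p)]) /\
  (forall b1 b2, b1 != b2 -> forall p, ~~ (on_gseg (gbus G b1) p && on_gseg (gbus G b2) p)) /\
  (forall c1 c2, c1 != c2 -> gcon G c1 != gcon G c2) /\
  (forall b c, ~~ on_gseg (gbus G b) (gcon G c)).

Definition parallel (s t : gseg) : Prop := horiz s = horiz t.

Definition perp (Bt Ct : finType) (E : Bt -> Ct -> bool)
  (A A' B B' C : Bt) (x y z : Ct) : Prop :=
  [/\ uniq [:: A; A'; B; B'; C], uniq [:: x; y; z],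
      [/\ E A x, E A' x, E B x & E B' x],
      [/\ E A y, E A' y, E B y & E C y] &
      [/\ E A z, E A' z, E B' z & E C z]].

Definition flipper (Bt Ct : finType) (E : Bt -> Ct -> bool)
  (A A' B B' C : Bt) (x y z o : Ct) : Prop :=
  [/\ perp E A A' B B' C x y z, o \notin [:: x; y; z], E B o & E B' o].

(* G contains an (I,O)-chain: vertex-disjoint copies of an (I,o1)-flipper,
   an (I1,o2)-flipper, an (I2,o3)-flipper and an (I3,O)-perp, plus edges
   (I1,o1), (I2,o2), (I3,o3). *)
Definition has_chain (Bt Ct : finType) (E : Bt -> Ct -> bool) (I O : Bt) : Prop :=
  exists (A1 A1' B1' C1 : Bt) (x1 y1 z1 o1 : Ct)
         (I1 A2 A2' B2' C2 : Bt) (x2 y2 z2 o2 : Ct)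
         (I2 A3 A3' B3' C3 : Bt) (x3 y3 z3 o3 : Ct)
         (I3 A4' B4' C4 : Bt) (x4 y4 z4 : Ct),
    [/\ flipper E A1 A1' I B1' C1 x1 y1 z1 o1,
        flipper E A2 A2' I1 B2' C2 x2 y2 z2 o2,
        flipper E A3 A3' I2 B3' C3 x3 y3 z3 o3,
        perp E I3 A4' O B4' C4 x4 y4 z4 &
        [/\ uniq [:: A1; A1'; I; B1'; C1; A2; A2'; I1; B2'; C2;
                  A3; A3'; I2; B3'; C3; I3; A4'; O; B4'; C4],
            uniq [:: x1; y1; z1; o1; x2; y2; z2; o2; x3; y3; z3; o3; x4; y4; z4],
            E I1 o1, E I2 o2 & E I3 o3]].

From mathcomp Require Import all_boot all_order all_algebra.
From mathcomp Require Import zify.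
Import Num.Theory.
Set Implicit Arguments. Unset Strict Implicit.

(* Two parallel buses adjacent to the same connector c lie on opposite sides
   of c: otherwise the edge to the farther one would cross the nearer one.
   Hence no three neighbours of c are parallel, and the four neighbours of a
   connector of degree four split into two horizontal and two vertical buses.
   In an (A,B)-perp this forces A // A' and B // B', with B perpendicular to A;
   in a flipper the connector o, adjacent to B and B', then makes every other
   neighbour of o perpendicular to B.  Along an (I,O)-chain the direction thus
   turns four times, from I to I1, I2, I3 and O. *)

Definition offset (s : gseg) (p : gpoint) : int :=
  (line s - (if horiz s then p.2 else p.1))%R.

Section Realization.

Variables (Bt Ct : finType) (E : Bt -> Ct -> bool) (G : drawing Bt Ct).
Hypothesis realG : realization E G.

Local Notation dir b := (horiz (gbus G b)).
Local Notation side b c := (0 < offset (gbus G b) (gcon G c))%R.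

Lemma parallel_neighbours_opposite_sides b1 b2 c :
  E b1 c -> E b2 c -> b1 != b2 -> dir b1 = dir b2 -> side b1 c = ~~ side b2 c.
Proof.
move: realG => [_ [edgeG [disjG [_ offG]]]] e1 e2 n12 par.
have [on1 _ cross1] := edgeG _ _ e1.
have [on2 _ cross2] := edgeG _ _ e2.
have n21 : b2 != b1 by rewrite eq_sym.
have := cross1 b2 (foot (gbus G b2) (gcon G c)) n21.
have := cross2 b1 (foot (gbus G b1) (gcon G c)) n12.
have := disjG _ _ n12; have := offG b1 c; have := offG b2 c.
move: on1 on2 par {cross1 cross2 edgeG disjG offG}; rewrite /offset.
case: (gcon G c) => cx cy.
case: (gbus G b1) => [h1 l1 lo1 hi1]; case: (gbus G b2) => [h2 l2 lo2 hi2] /=.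
rewrite /on_gseg /foot /in_seg => + + par; subst h2.
case: h1 => /= on1 on2 off2 off1 disj cross2 cross1.
- have := disj (cx, l1); have := disj (cx, l2).
  move: on1 on2 off1 off2 cross1 cross2 => /=.
  by case: (ltrP 0 (l1 - cy)); case: (ltrP 0 (l2 - cy)) => /=; lia.
- have := disj (l1, cy); have := disj (l2, cy).
  move: on1 on2 off1 off2 cross1 cross2 => /=.
  by case: (ltrP 0 (l1 - cx)); case: (ltrP 0 (l2 - cx)) => /=; lia.
Qed.

Lemma perpendicular_to_parallel_neighbours b1 b2 b3 c :
  E b1 c -> E b2 c -> E b3 c -> uniq [:: b1; b2; b3] ->
  dir b2 = dir b3 -> dir b1 = ~~ dir b2.
Proof.
move=> e1 e2 e3 /=; rewrite !inE !negb_or andbT => /andP[/andP[n12 n13] n23].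
move=> par23; have [/eqP par12 | ] := boolP (dir b1 == dir b2); last first.
  by case: (dir b1); case: (dir b2).
have := parallel_neighbours_opposite_sides e1 e2 n12 par12.
have := parallel_neighbours_opposite_sides e1 e3 n13 (etrans par12 par23).
have := parallel_neighbours_opposite_sides e2 e3 n23 par23.
by case: (side b1 c); case: (side b2 c); case: (side b3 c).
Qed.

Lemma neighbours_parallel_in_pairs b1 b2 b3 b4 c :
  E b1 c -> E b2 c -> E b3 c -> E b4 c -> uniq [:: b1; b2; b3; b4] ->
  (dir b1 == dir b2) = (dir b3 == dir b4).
Proof.
move=> e1 e2 e3 e4 U.
have U' : uniq (rot 2 [:: b1; b2; b3; b4]) by rewrite rot_uniq.
have perp := perpendicular_to_parallel_neighbours.
have perp1 := perp _ _ _ _ e1 e3 e4 (mask_uniq U [:: true; false; true; true]).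
have perp2 := perp _ _ _ _ e2 e3 e4 (mask_uniq U [:: false; true; true; true]).
have perp3 := perp _ _ _ _ e3 e1 e2 (mask_uniq U' [:: true; false; true; true]).
have perp4 := perp _ _ _ _ e4 e1 e2 (mask_uniq U' [:: false; true; true; true]).
have [/eqP par12 | npar12] := boolP (dir b1 == dir b2).
  by rewrite perp3 // perp4 // eqxx.
apply/esym/negbTE; apply: contra npar12 => /eqP par34.
by rewrite perp1 // perp2.
Qed.

Lemma perp_dir A A' B B' C x y z :
  perp E A A' B B' C x y z -> dir B = ~~ dir A /\ dir B' = dir B.
Proof.
move=> [U _ [ax a'x bx b'x] [ay a'y b_y cy] [az a'z b'z cz]].
have pairs := neighbours_parallel_in_pairs.
have px := pairs _ _ _ _ _ ax a'x bx b'x (mask_uniq U [:: true; true; true; true]).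
have py := pairs _ _ _ _ _ ay a'y b_y cy (mask_uniq U [:: true; true; true; false; true]).
have pz := pairs _ _ _ _ _ az a'z b'z cz (mask_uniq U [:: true; true; false; true; true]).
have parAA' : dir A = dir A'.
  apply/eqP; move: px py pz; case: (dir A == dir A') => //.
  by case: (dir B); case: (dir B'); case: (dir C).
have parBB' : dir B = dir B' by apply/eqP; rewrite -px parAA'.
split=> //; apply/esym/negbLR.
exact: perpendicular_to_parallel_neighbours ax bx b'x
  (mask_uniq U [:: true; false; true; true]) parBB'.
Qed.

Lemma flipper_dir A A' B B' C x y z o D :
  flipper E A A' B B' C x y z o -> E D o -> D \notin [:: B; B'] ->
  dir D = ~~ dir B.
Proof.
move=> [P _ bo b'o] Do DBB'; have [_ parB'B] := perp_dir P.
apply: (perpendicular_to_parallel_neighbours Do bo b'o _ (esym parB'B)).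
case: P => U _ _ _ _.
by rewrite cons_uniq DBB' (mask_uniq U [:: false; false; true; true]).
Qed.

End Realization.

Theorem lemma6 (Bt Ct : finType) (E : Bt -> Ct -> bool) (I O : Bt) :
  bus_graph E -> has_chain E I O ->
  forall G : drawing Bt Ct, realization E G -> parallel (gbus G I) (gbus G O).
Proof.
move=> _ [A1 [A1' [B1' [C1 [x1 [y1 [z1 [o1 [I1 [A2 [A2' [B2' [C2 [x2 [y2 [z2 [o2
  [I2 [A3 [A3' [B3' [C3 [x3 [y3 [z3 [o3 [I3 [A4' [B4' [C4 [x4 [y4 [z4
  [F1 F2 F3 P4 [U _ e1 e2 e3]]]]]]]]]]]]]]]]]]]]]]]]]]]]]]]]]]] G realG.
have [n1 n2 n3] :
    [/\ I1 \notin [:: I; B1'], I2 \notin [:: I1; B2'] & I3 \notin [:: I2; B3']].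
  split; apply/negP; rewrite !inE => /orP[]/eqP eq_I;
    by move: U; rewrite eq_I /= !inE eqxx /= !orbT /= !andbF.
rewrite /parallel (perp_dir realG P4).1 (flipper_dir realG F3 e3 n3).
by rewrite (flipper_dir realG F2 e2 n2) (flipper_dir realG F1 e1 n1) !negbK.
Qed.
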